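(* For each $i \in [n]$, let $r_i$ be the number of elements $x_j$, $j \ne i$, that are larger than $x_i$ in the comparison graph. Let $S$ be any set of $\min\{n, 2k+1\}$ elements having the smallest values of $r_i$ (ties broken arbitrarily). Then $S$ contains the uncorrupted maximum.
   Context: Model: there are $n$ elements $x_1,\dots,x_n$, exactly $k$ of which are corrupted (unknown to the algorithm). For every pair of distinct elements the comparison graph (a tournament) specifies which one is larger. The comparison graph restricted to the $n-k$ uncorrupted elements is acyclic; comparisons involving corrupted elements may be oriented arbitrarily. The uncorrupted maximum is the uncorrupted element larger than every other uncorrupted element. *)

From mathcomp Require Import all_boot.
Set Implicit Arguments. Unset Strict Implicit. Unset Printing Implicit Defensive.

(* Elements x_1..x_n are indexed by 'I_n.  [gt i j] means "x_i is larger
   than x_j" in the comparison graph. *)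

Definition tournament (n : nat) (gt : rel 'I_n) : Prop :=
  (forall i, ~~ gt i i) /\
  (forall i j, i != j -> (gt i j || gt j i) /\ ~~ (gt i j && gt j i)).

Definition acyclic_outside (n : nat) (gt : rel 'I_n) (C : {set 'I_n}) : Prop :=
  forall (x : 'I_n) (s : seq 'I_n),
    all (fun y => y \notin C) (x :: s) -> ~~ cycle gt (x :: s).

Definition uncorrupted_max (n : nat) (gt : rel 'I_n) (C : {set 'I_n})
    (m : 'I_n) : Prop :=
  m \notin C /\ forall j, j \notin C -> j != m -> gt m j.

Definition rank_count (n : nat) (gt : rel 'I_n) (i : 'I_n) : nat :=
  #|[set j | (j != i) && gt j i]|.

Definition smallest_r (n : nat) (gt : rel 'I_n) (S : {set 'I_n}) : Prop :=
  forall i j, i \in S -> j \notin S -> rank_count gt i <= rank_count gt j.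

From mathcomp Require Import all_boot.
From mathcomp Require Import zify.

Set Implicit Arguments.
Unset Strict Implicit.
Unset Printing Implicit Defensive.

(* Suppose the uncorrupted maximum m is not in S.  Only the k corrupted
   elements can beat m, so r_m <= k; and S has 2k+1 elements, at least k+1
   of them uncorrupted.  On uncorrupted elements the tournament is
   transitive, so among those k+1 there is one, u, beaten by the other k;
   it is also beaten by m, so r_u >= k+1 > r_m, contradicting the choice
   of S. *)

Section Tournament.

Variables (n : nat) (gt : rel 'I_n) (C : {set 'I_n}).

Lemma rank_count_ge (A : {set 'I_n}) i :
  (forall j, j \in A -> (j != i) && gt j i) -> #|A| <= rank_count gt i.
Proof. by move=> hA; apply/subset_leq_card/subsetP => j /hA; rewrite inE. Qed.

Hypothesis tour : tournament gt.

Lemma tournament_total i j : i != j -> gt i j || gt j i.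
Proof. by case: tour => _ /(_ i j) h /h []. Qed.

Lemma tournament_asym i j : gt i j -> ~~ gt j i.
Proof.
case: tour => irr tot hij; case: (eqVneq i j) => [eij | /tot [_]].
  by rewrite eij (negbTE (irr j)) in hij.
by rewrite hij.
Qed.

Lemma rank_count_uncorrupted_max m :
  uncorrupted_max gt C m -> rank_count gt m <= #|C|.
Proof.
case=> _ mmax; apply/subset_leq_card/subsetP => j; rewrite inE => /andP [jm hjm].
by apply: contraLR hjm => jC; apply: tournament_asym; apply: mmax.
Qed.

Hypothesis acyc : acyclic_outside gt C.

(* A 3-cycle a -> b -> c -> a is excluded by acyclicity. *)
Lemma acyclic_outside_trans a b c : a \notin C -> b \notin C -> c \notin C ->
  gt a b -> gt b c -> gt a c.
Proof.
move=> aC bC cC hab hbc; case: (eqVneq a c) => [eac | nac].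
  by rewrite eac (negbTE (tournament_asym hbc)) in hab.
case/orP: (tournament_total nac) => // hca.
by have := @acyc a [:: b; c]; rewrite /= aC bC cC hab hbc hca => /(_ isT).
Qed.

(* The sink is an element beating the fewest members of U: if it beat some
   v in U, transitivity would make v beat strictly fewer. *)
Lemma uncorrupted_sink (U : {set 'I_n}) u0 :
  u0 \in U -> (forall w, w \in U -> w \notin C) ->
  exists2 u, u \in U & forall v, v \in U -> v != u -> gt v u.
Proof.
move=> u0U UC.
case: (arg_minnP (fun i => #|[set w in U | gt i w]|) u0U) => u uU umin.
exists u => // v vU vu; case/orP: (tournament_total vu) => // huv.
have : #|[set w in U | gt v w]| < #|[set w in U | gt u w]|.
  apply/proper_card/properP; split.
    apply/subsetP => w; rewrite !inE => /andP [wU hvw]; rewrite wU.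
    exact: (acyclic_outside_trans (UC _ uU) (UC _ vU) (UC _ wU) huv hvw).
  by exists v; rewrite !inE ?vU ?huv ?(negbTE (tour.1 v)) ?andbF.
by rewrite ltnNge umin.
Qed.

End Tournament.

Theorem mainTheorem2 (n k : nat) (C : {set 'I_n}) (gt : rel 'I_n) :
  #|C| = k ->
  tournament gt ->
  acyclic_outside gt C ->
  forall S : {set 'I_n},
    #|S| = minn n (2 * k + 1) ->
    smallest_r gt S ->
    forall m : 'I_n, uncorrupted_max gt C m -> m \in S.
Proof.
move=> hC tour acyc S hS sm m mmax; apply: contraT => mS.
have hS2 : #|S| = 2 * k + 1.
  case: (leqP n (2 * k + 1)) => h; last by rewrite hS (minn_idPr (ltnW h)).
  suff eS : S = setT by rewrite eS inE in mS.
  by apply/eqP; rewrite eqEcard subsetT cardsT card_ord hS (minn_idPl h) leqnn.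
set U := S :\: C.
have hU : k < #|U|.
  have := cardsID C S; have := subset_leq_card (subsetIr S C); rewrite -/U; lia.
have [u0 u0U] : exists u0, u0 \in U by apply/set0Pn; rewrite -card_gt0; lia.
have [u uU sink] := uncorrupted_sink tour acyc u0U (fun w wU => (setDP wU).2).
have mU : m \notin U by rewrite inE (negbTE mS) andbF.
have mu : m != u by apply: contraNneq mU => ->.
have k_lt_beaten : k < #|m |: (U :\ u)|.
  by rewrite cardsU1 in_setD1 (negbTE mU) andbF; move: hU; rewrite (cardsD1 u U) uU.
have : #|m |: (U :\ u)| <= rank_count gt u.
  apply: rank_count_ge => w; rewrite in_setU1 in_setD1.
  case/orP => [/eqP -> | /andP [wu wU]]; last by rewrite wu sink.
  by rewrite mu mmax.2 1?eq_sym //; case/setDP: uU.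
have := sm u m (setDP uU).1 mS; have := rank_count_uncorrupted_max tour mmax; lia.
Qed.
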